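(* Let $G$ be a finite group and $n$ a positive divisor of $|G|$. Then $G$ has at least $d(n)$ cyclic subgroups whose order divides $n$. Moreover the following are equivalent: (1) for every positive divisor $m$ of $n$, $G$ has exactly $m$ elements $x$ with $x^m=1$; (2) $G$ has exactly $d(n)$ cyclic subgroups whose order divides $n$; (3) the subgroup of $G$ generated by all cyclic subgroups of $G$ of order dividing $n$ is cyclic of order $n$.
   Context: $d(n)$ denotes the number of positive divisors of $n$. *)

From mathcomp Require Import all_boot all_fingroup all_solvable.
Set Implicit Arguments. Unset Strict Implicit. Unset Printing Implicit Defensive.
Local Open Scope group_scope.

Definition ndivisors (n : nat) : nat := size (divisors n).

Definition cyc_subgroups_dvd (gT : finGroupType) (G : {set gT}) (n : nat)
  : {set {set gT}} :=
  [set H : {set gT} | [&& group_set H, H \subset G, cyclic H & #|H| %| n]].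

(* Write c_k for the number of cyclic subgroups of G of order k and L_m for the
   set of solutions of x^m = 1 in G.  Counting elements by their order gives
   |L_m| = sum_{k | m} c_k phi(k), and Frobenius' theorem gives m <= |L_m| for
   every m dividing n.  An arithmetic lemma turns these bounds into
   sum_{k | n} c_k >= d(n): split off a prime p of n, apply induction to the
   p'-part of n, and compare the resulting weighted prefix sums by Abel
   summation, the weights phi(p^i) being nondecreasing.  Equality forces
   |L_m| = m for all m | n, except that phi(1) = phi(2) hides the odd m when n
   is even; for those, |L_m| = m follows from |L_2m| = 2m, |L_2| = 2 and the
   fact that L_m and L_2 meet trivially.  Conversely, if |L_m| = m for all
   m | n, then c_k <= 1, hence c_k = 1, for all k | n; the cyclic subgroup of
   order n is then L_n, which is also the union of all cyclic subgroups of
   order dividing n. *)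

From mathcomp Require Import all_boot all_order all_algebra all_fingroup all_solvable.
From mathcomp Require Import ring zify.

Set Implicit Arguments. Unset Strict Implicit. Unset Printing Implicit Defensive.
Import Order.TTheory GRing.Theory Num.Theory.

Section PrefixWeightedSums.
Local Open Scope ring_scope.
Variables (R : numDomainType) (w u v : nat -> R) (e : nat).
Hypotheses (w_gt0 : forall i, 0 < w i) (w_homo : forall i, w i <= w i.+1).
Hypothesis prefix_le : forall j, (j <= e)%N ->
  \sum_(i < j.+1) w i * v i <= \sum_(i < j.+1) w i * u i.

Let X j := \sum_(i < j.+1) (u i - v i).
Let P j := \sum_(i < j.+1) w i * (u i - v i).

Let XS j : X j.+1 = X j + (u j.+1 - v j.+1).
Proof. exact: big_ord_recr. Qed.

Let PS j : P j.+1 = P j + w j.+1 * (u j.+1 - v j.+1).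
Proof. exact: big_ord_recr. Qed.

Let P_ge0 j : (j <= e)%N -> 0 <= P j.
Proof.
by move=> le_je; rewrite /P (eq_bigr _ (fun i _ => mulrBr _ _ _)) sumrB subr_ge0 prefix_le.
Qed.

Let P_le j : (j <= e)%N -> P j <= w j * X j.
Proof.
elim: j => [|j IHj] le_je; first by rewrite /P /X !big_ord1.
have {}IHj := IHj (ltnW le_je).
have X_ge0 : 0 <= X j.
  by rewrite -(pmulr_rge0 _ (w_gt0 j)); exact: le_trans (P_ge0 (ltnW le_je)) IHj.
rewrite PS XS [in leRHS]mulrDr lerD2r.
exact: le_trans IHj (ler_wpM2r X_ge0 (w_homo j)).
Qed.

Let X_ge0 j : (j <= e)%N -> 0 <= X j.
Proof.
move=> le_je; rewrite -(pmulr_rge0 _ (w_gt0 j)).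
exact: le_trans (P_ge0 le_je) (P_le le_je).
Qed.

Let defect_telescope k : w k * X k - P k = \sum_(j < k) (w j.+1 - w j) * X j.
Proof.
elim: k => [|k IHk]; first by rewrite big_ord0 /P /X !big_ord1 subrr.
by rewrite big_ord_recr -IHk XS PS /=; ring.
Qed.

Lemma ler_sum_prefix_weighted : \sum_(i < e.+1) v i <= \sum_(i < e.+1) u i.
Proof. by rewrite -subr_ge0 -sumrB X_ge0. Qed.

Lemma eq_sum_prefix_weighted : \sum_(i < e.+1) v i = \sum_(i < e.+1) u i ->
  forall j, (j <= e)%N -> w j < w j.+1 ->
  \sum_(i < j.+1) w i * v i = \sum_(i < j.+1) w i * u i.
Proof.
move=> eq_sum j le_je lt_w.
have Xe0 : X e = 0 by rewrite /X sumrB eq_sum subrr.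
have terms_ge0 (i : 'I_e) : true -> 0 <= (w i.+1 - w i) * X i.
  by move=> _; rewrite mulr_ge0 ?subr_ge0 ?X_ge0 // ltnW.
have := defect_telescope e; rewrite Xe0 mulr0 sub0r => tel.
have Pe0 : P e = 0 by apply/eqP; rewrite eq_le P_ge0 // andbT -oppr_ge0 tel sumr_ge0.
have Xj0 : X j = 0.
  case: (ltngtP j e) le_je => // [lt_je _ | -> //].
  move: tel; rewrite Pe0 oppr0 => /esym/psumr_eq0P/(_ (Ordinal lt_je) isT).
  by move=> /(_ terms_ge0)/eqP; rewrite mulf_eq0 subr_eq0 (gt_eqF lt_w) => /eqP.
apply/esym/eqP; rewrite -subr_eq0 -sumrB.
rewrite (eq_bigr _ (fun i _ => esym (mulrBr _ _ _))) -/(P j).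
by rewrite eq_le P_ge0 // andbT -(mulr0 (w j)) -Xj0 P_le.
Qed.

End PrefixWeightedSums.

Section DivisorsPfactor.
Variables (p r : nat).
Hypotheses (p_pr : prime p) (p_ndvd_r : ~~ (p %| r)).

Let r_gt0 : 0 < r.
Proof. by case: r p_ndvd_r => //; rewrite dvdn0. Qed.

Lemma logn_pfactorM j t : t %| r -> logn p (p ^ j * t) = j.
Proof.
move=> t_dvd_r; have t_gt0 := dvdn_gt0 r_gt0 t_dvd_r.
have p_ndvd_t : ~~ (p %| t) by apply: contra p_ndvd_r => /dvdn_trans->.
rewrite lognM ?expn_gt0 ?(prime_gt0 p_pr) // pfactorK //.
by rewrite logn_coprime ?addn0 // prime_coprime.
Qed.

Lemma perm_divisors_pfactor e :
  perm_eq (divisors (p ^ e * r)) [seq p ^ j * t | j <- iota 0 e.+1, t <- divisors r].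
Proof.
have n_gt0 : 0 < p ^ e * r by rewrite muln_gt0 expn_gt0 (prime_gt0 p_pr).
apply: uniq_perm; rewrite ?divisors_uniq //.
  apply: allpairs_uniq; rewrite ?iota_uniq ?divisors_uniq //.
  move=> [j t] [j' t'] /allpairsP[[a b] [_ b_r [-> ->]]].
  move=> /allpairsP[[a' b'] [_ b'_r [-> ->]]] /= eq_ab.
  rewrite -!dvdn_divisors // in b_r b'_r.
  have eq_a : a = a' by rewrite -(logn_pfactorM a b_r) eq_ab logn_pfactorM.
  move: eq_ab; rewrite eq_a => /eqP.
  by rewrite eqn_pmul2l ?expn_gt0 ?(prime_gt0 p_pr) // => /eqP->.
move=> k; rewrite -dvdn_divisors //; apply/idP/allpairsP => [k_dvd | [[j t] [+ + ->]]].
  have k_gt0 := dvdn_gt0 n_gt0 k_dvd.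
  exists (logn p k, k`_p^'); split; last by rewrite -p_part partnC.
    by rewrite mem_iota ltnS -(logn_pfactorM e (dvdnn r)) dvdn_leq_log.
  rewrite -dvdn_divisors // -(@Gauss_dvdr _ (p ^ e)); last first.
    by rewrite coprime_sym (@pnat_coprime p) ?pnatX ?pnat_id ?part_pnat.
  exact: dvdn_trans (dvdn_part _ _) k_dvd.
rewrite mem_iota ltnS -dvdn_divisors // => le_je t_dvd /=.
by rewrite dvdn_mul // dvdn_exp2l.
Qed.

Lemma big_divisors_pfactor (R : Type) (idx : R) (op : Monoid.com_law idx) e
    (F : nat -> R) :
  \big[op/idx]_(k <- divisors (p ^ e * r)) F k
    = \big[op/idx]_(j < e.+1) \big[op/idx]_(t <- divisors r) F (p ^ j * t).
Proof.
rewrite (perm_big _ (perm_divisors_pfactor e)) big_allpairs_dep /=.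
by rewrite -(big_mkord xpredT (fun j => \big[op/idx]_(t <- divisors r) F (p ^ j * t))).
Qed.

Lemma size_divisors_pfactor e : size (divisors (p ^ e * r)) = e.+1 * size (divisors r).
Proof. by rewrite -!sum1_size big_divisors_pfactor sum_nat_const card_ord sum1_size. Qed.

End DivisorsPfactor.

Lemma logn_partnC p m : 0 < m -> p ^ logn p m * m`_p^' = m.
Proof. by move=> m_gt0; rewrite -p_part partnC. Qed.

Lemma p'part_ndvd p m : prime p -> ~~ (p %| m`_p^').
Proof. by move=> p_pr; rewrite -p'natE // part_pnat. Qed.

Section TotientPfactor.
Variable p : nat.
Hypothesis p_pr : prime p.

Lemma totient_pfactorS j : totient (p ^ j.+1) = p.-1 * p ^ j.
Proof. exact: totient_pfactor. Qed.

Lemma sum_totient_pfactor j : \sum_(i < j.+1) totient (p ^ i) = p ^ j.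
Proof.
elim: j => [|j IHj]; first by rewrite big_ord1.
rewrite big_ord_recr /= IHj totient_pfactorS -{1}(mul1n (p ^ j)) -mulnDl add1n.
by rewrite prednK ?prime_gt0 // expnS.
Qed.

Lemma totient_pfactor_ltS j : (p != 2) || (0 < j) -> totient (p ^ j) < totient (p ^ j.+1).
Proof.
have p_gt1 := prime_gt1 p_pr; rewrite totient_pfactorS; case: j => [|j].
  by rewrite orbF expn0 muln1 (_ : totient 1 = 1) // => p_neq2; lia.
move=> _; rewrite totient_pfactorS ltn_pmul2l ?expnS ?ltn_Pmull ?expn_gt0 //; lia.
Qed.

Lemma totient_pfactor_leS j : totient (p ^ j) <= totient (p ^ j.+1).
Proof.
have [p_eq2|p_neq2] := eqVneq p 2; last by rewrite ltnW // totient_pfactor_ltS ?p_neq2.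
case: j => [|j]; first by rewrite p_eq2.
by rewrite ltnW // totient_pfactor_ltS // orbT.
Qed.

End TotientPfactor.

Definition lift_pfactor (p j : nat) (c : nat -> nat) (t : nat) : nat :=
  \sum_(i < j.+1) c (p ^ i * t) * totient (p ^ i).

Lemma sum_divisors_lift_pfactor p j s (c : nat -> nat) : prime p -> ~~ (p %| s) ->
  \sum_(k <- divisors (p ^ j * s)) c k * totient k
    = \sum_(t <- divisors s) lift_pfactor p j c t * totient t.
Proof.
move=> p_pr p_ndvd_s; have s_gt0 : 0 < s by case: s p_ndvd_s; rewrite ?dvdn0.
rewrite big_divisors_pfactor // exchange_big /=; apply: eq_big_seq => t.
rewrite -dvdn_divisors // => t_dvd_s; rewrite /lift_pfactor big_distrl /=.
apply: eq_bigr => i _; rewrite totient_coprime -?mulnA // coprimeXl // prime_coprime //.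
by apply: contra p_ndvd_s => /dvdn_trans->.
Qed.

(* With A_i = sum_{t | r} c (p^i t), the hypothesis says that the prefix sums
   of phi(p^i) A_i dominate those of phi(p^i) a d(r); Abel summation then
   compares the unweighted sums. *)
Lemma le_sum_divisors_pfactor p e r a (c : nat -> nat) : prime p -> ~~ (p %| r) ->
  (forall j, j <= e ->
     a * p ^ j * size (divisors r) <= \sum_(t <- divisors r) lift_pfactor p j c t) ->
  a * size (divisors (p ^ e * r)) <= \sum_(k <- divisors (p ^ e * r)) c k /\
  (\sum_(k <- divisors (p ^ e * r)) c k = a * size (divisors (p ^ e * r)) ->
   forall j, j <= e -> (p != 2) || (0 < j) ->
   \sum_(t <- divisors r) lift_pfactor p j c t = a * p ^ j * size (divisors r)).
Proof.
move=> p_pr p_ndvd_r lift_ge.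
set D := size (divisors r); pose A i := \sum_(t <- divisors r) c (p ^ i * t).
have sum_lift j : \sum_(t <- divisors r) lift_pfactor p j c t
                    = \sum_(i < j.+1) totient (p ^ i) * A i.
  rewrite exchange_big /=; apply: eq_bigr => i _.
  by rewrite /A big_distrr /=; apply: eq_bigr => t _; rewrite mulnC.
have bound j : a * p ^ j * D = \sum_(i < j.+1) totient (p ^ i) * (a * D).
  by rewrite -big_distrl sum_totient_pfactor //= mulnCA mulnA.
have sum_n : \sum_(k <- divisors (p ^ e * r)) c k = \sum_(i < e.+1) A i.
  exact: big_divisors_pfactor.
have size_n : a * size (divisors (p ^ e * r)) = \sum_(i < e.+1) a * D.
  by rewrite size_divisors_pfactor // sum_nat_const card_ord mulnCA.
pose w i : int := (totient (p ^ i))%:R%R.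
pose u i : int := (A i)%:R%R; pose v (i : nat) : int := (a * D)%:R%R.
have w_gt0 i : (0 < w i)%R by rewrite ltr0n totient_gt0 expn_gt0 prime_gt0.
have w_homo i : (w i <= w i.+1)%R by rewrite ler_nat totient_pfactor_leS.
have cast_prefix j (f : nat -> nat) :
    (\sum_(i < j.+1) w i * (f i)%:R)%R = (\sum_(i < j.+1) totient (p ^ i) * f i)%:R%R.
  by rewrite natr_sum; apply: eq_bigr => i _; rewrite natrM.
have prefix_le j : j <= e -> (\sum_(i < j.+1) w i * v i <= \sum_(i < j.+1) w i * u i)%R.
  move=> le_je; rewrite (cast_prefix j (fun=> a * D)) cast_prefix ler_nat.
  by rewrite -bound -sum_lift lift_ge.
have := ler_sum_prefix_weighted w_gt0 w_homo prefix_le.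
rewrite -!natr_sum ler_nat -size_n -sum_n => le_n; split=> // eq_n.
have := eq_sum_prefix_weighted w_gt0 w_homo prefix_le.
rewrite -!natr_sum -size_n -sum_n eq_n => /(_ erefl) eq_prefix j le_je j_cond.
apply/esym/eqP; rewrite sum_lift bound -(eqr_nat int).
rewrite -(cast_prefix j (fun=> a * D)) -cast_prefix.
by apply/eqP/eq_prefix; rewrite // ltr_nat totient_pfactor_ltS.
Qed.

(* The factor [a] is there for the induction, which applies the statement to the
   p'-part of [n] with [a * p ^ j].  Since phi(1) = phi(2), nothing is claimed
   for odd [m] when [n] is even. *)
Theorem totient_weighted_divisor_count n a (c : nat -> nat) : 0 < n ->
  (forall m, m %| n -> a * m <= \sum_(k <- divisors m) c k * totient k) ->
  a * size (divisors n) <= \sum_(k <- divisors n) c k /\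
  (\sum_(k <- divisors n) c k = a * size (divisors n) ->
   forall m, m %| n -> odd n || ~~ odd m ->
   \sum_(k <- divisors m) c k * totient k = a * m).
Proof.
elim/ltn_ind: n a c => n IHn a c n_gt0 c_ge.
have [le_n1 | lt1n] := leqP n 1.
  have n1 : n = 1 by lia.
  subst n; have := c_ge 1 (dvdnn 1).
  rewrite /= !big_seq1 (_ : totient 1 = 1) // !muln1 => le_a; split=> // eq_a m.
  by rewrite dvdn1 => /eqP-> _; rewrite /= big_seq1 (_ : totient 1 = 1) // !muln1.
set p := pdiv n; have p_pr : prime p by apply: pdiv_prime.
set e := logn p n; set r := n`_p^'.
have nE : n = p ^ e * r by rewrite logn_partnC.
have p_ndvd_r : ~~ (p %| r) := p'part_ndvd n p_pr.
have e_gt0 : 0 < e by rewrite logn_gt0 mem_primes p_pr n_gt0 pdiv_dvd.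
have r_gt0 : 0 < r := part_gt0 _ _.
have lt_rn : r < n.
  by rewrite [in X in _ < X]nE ltn_Pmull // -(expn0 p) ltn_exp2l ?prime_gt1.
have lift_ge j : j <= e -> forall s, s %| r ->
    a * p ^ j * s <= \sum_(t <- divisors s) lift_pfactor p j c t * totient t.
  move=> le_je s s_dvd_r; have p_ndvd_s : ~~ (p %| s).
    by apply: contra p_ndvd_r => /dvdn_trans->.
  rewrite -sum_divisors_lift_pfactor // -mulnA; apply: c_ge.
  by rewrite nE dvdn_mul // dvdn_exp2l.
have IHr j (le_je : j <= e) := IHn r lt_rn _ _ r_gt0 (lift_ge j le_je).
have [le_n eq_n] := le_sum_divisors_pfactor p_pr p_ndvd_r (fun j le_je => (IHr j le_je).1).
rewrite -nE in le_n eq_n; split=> // /eq_n eq_lift m m_dvd_n m_cond.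
have m_gt0 := dvdn_gt0 n_gt0 m_dvd_n.
set j := logn p m; set s := m`_p^'.
have mE : m = p ^ j * s by rewrite logn_partnC.
have le_je : j <= e by apply: dvdn_leq_log.
have s_dvd_r : s %| r by apply: partn_dvd.
have p_ndvd_s : ~~ (p %| s) := p'part_ndvd m p_pr.
have [j_cond s_cond] : ((p != 2) || (0 < j)) /\ (odd r || ~~ odd s).
  move: m_cond; rewrite nE mE !oddM !oddX.
  have [p2 | p_neq2] := eqVneq p 2.
    move: p_ndvd_r p_ndvd_s; rewrite p2 !dvdn2 !negbK => -> -> /=.
    by rewrite !orbF !andbT (gtn_eqF e_gt0) /= -lt0n.
  have odd_p : odd p by apply: contraNT p_neq2 => /(prime_oddPn p_pr)->.
  by rewrite odd_p !orbT.
by rewrite mE sum_divisors_lift_pfactor // (IHr j le_je).2 ?eq_lift // mulnA.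
Qed.

Lemma eq1_of_sum_ge_size (T : eqType) (s : seq T) (a : T -> nat) :
  (forall k, k \in s -> a k <= 1) -> size s <= \sum_(k <- s) a k ->
  forall k, k \in s -> a k = 1.
Proof.
move=> a_le1 size_le; have: \sum_(k <- s) (1 - a k) == 0.
  by rewrite big_seq_cond sumnB -?big_seq_cond ?sum1_size ?subn_eq0 // => k /andP[/a_le1].
rewrite sum_nat_seq_eq0 => /allP a_ge1 k k_s; have := a_ge1 k k_s; rewrite subn_eq0.
by have := a_le1 k k_s; lia.
Qed.

Lemma card_dvd_partition (T : finType) (A : {pred T}) (f : T -> nat) m : 0 < m ->
  #|[set x in A | f x %| m]| = \sum_(k <- divisors m) #|[set x in A | f x == k]|.
Proof.
move=> m_gt0; rewrite -sum1_card.
transitivity (\sum_(x in A) \sum_(k <- divisors m | k == f x) 1).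
  rewrite big_mkcond [RHS]big_mkcond; apply: eq_bigr => x _; rewrite !inE.
  by case: (x \in A) => //=; rewrite sum1_count count_uniq_mem ?divisors_uniq // -dvdn_divisors.
rewrite (eq_bigr _ (fun x _ => big_mkcond _ _)) exchange_big /=; apply: eq_bigr => k _.
rewrite -sum1_card big_mkcond [RHS]big_mkcond; apply: eq_bigr => x _.
by rewrite !inE eq_sym; case: (x \in A).
Qed.

Section CyclicSubgroups.
Local Open Scope group_scope.
Variables (gT : finGroupType) (G : {group gT}).

Definition cycles_of_order k := [set <[x]> | x in G & #[x] == k].

Lemma card_order_elements k :
  #|[set x in G | #[x] == k]| = (#|cycles_of_order k| * totient k)%N.
Proof.
rewrite -sum1_card (partition_big_imset cycle) /= -sum_nat_const.
apply: eq_bigr => _ /imsetP[x /setIdP[Gx /eqP <-] ->].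
rewrite sum1dep_card totient_gen; apply: eq_card => y; rewrite !inE /generator.
move: Gx; rewrite andbC eq_sym -!cycle_subG /order.
by case: eqP => // -> ->; rewrite eqxx.
Qed.

Lemma card_Ldiv_divisors m : (0 < m)%N ->
  #|'Ldiv_m(G)| = \sum_(k <- divisors m) #|cycles_of_order k| * totient k.
Proof.
move=> m_gt0; rewrite (_ : 'Ldiv_m(G) = [set x in G | #[x] %| m]).
  by rewrite card_dvd_partition //; apply: eq_bigr => k _; rewrite card_order_elements.
by apply/setP => x; rewrite !inE order_dvdn.
Qed.

Lemma mem_cycles_of_order n k H : (k %| n)%N ->
  (H \in cycles_of_order k) = (H \in cyc_subgroups_dvd G n) && (#|H| == k).
Proof.
move=> k_dvd_n; apply/imsetP/idP => [[x /setIdP[Gx /eqP ox] ->]|].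
  by rewrite inE groupP cycle_subG Gx cycle_cyclic /= -/#[x] ox k_dvd_n eqxx.
rewrite inE => /andP[/and4P[_ sHG /cyclicP[x defH] _] /eqP oH].
by exists x => //; rewrite inE -cycle_subG /order -defH sHG oH /=.
Qed.

Lemma card_cyc_subgroups_dvd n : (0 < n)%N ->
  #|cyc_subgroups_dvd G n| = \sum_(k <- divisors n) #|cycles_of_order k|.
Proof.
move=> n_gt0; set C := cyc_subgroups_dvd G n.
have -> : C = [set H in C | #|H| %| n].
  by apply/setP => H; rewrite inE andb_idr // inE => /and4P[].
rewrite card_dvd_partition //; apply: eq_big_seq => k; rewrite -dvdn_divisors // => k_dvd_n.
by apply: eq_card => H; rewrite inE (mem_cycles_of_order _ k_dvd_n).
Qed.

Lemma bigcup_cyc_subgroups_dvd n :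
  \bigcup_(H in cyc_subgroups_dvd G n) H = 'Ldiv_n(G).
Proof.
apply/eqP; rewrite eqEsubset; apply/andP; split.
  apply/bigcupsP => H; rewrite inE => /and4P[gH sHG _ oH].
  rewrite subsetI sHG sub_LdivT (dvdn_trans _ oH) //.
  by have := exponent_dvdn (Group gH).
apply/subsetP => x /setIP[Gx]; rewrite inE -order_dvdn => ox.
apply/bigcupP; exists <[x]>; last exact: cycle_id.
by rewrite inE groupP cycle_subG Gx cycle_cyclic.
Qed.

Lemma card_Ldiv_gt0 m : (0 < #|'Ldiv_m(G)|)%N.
Proof. by apply/card_gt0P; exists 1; rewrite !inE group1 expg1n eqxx. Qed.

Lemma leq_card_Ldiv m : (m %| #|G|)%N -> (m <= #|'Ldiv_m(G)|)%N.
Proof. by move=> m_dvd; apply: dvdn_leq (card_Ldiv_gt0 m) (Frobenius_Ldiv m_dvd). Qed.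

Lemma card_Ldiv_cyclic (K : {group gT}) m :
  cyclic K -> (0 < m)%N -> (#|'Ldiv_m(K)| <= m)%N.
Proof.
move=> cycK m_gt0; pose L := Group (group_Ldiv m (cyclic_abelian cycK)).
have sLK : L \subset K by exact: subsetIl.
have cycL : cyclic L := cyclicS sLK cycK.
have eLm : (exponent L %| m)%N by rewrite -sub_LdivT; exact: subsetIr.
by rewrite -[#|_|]/#|L| -exponent_cyclic // dvdn_leq.
Qed.

Lemma cycle_eq_Ldiv x : x \in G -> #|'Ldiv_#[x](G)| = #[x] -> <[x]> = 'Ldiv_#[x](G).
Proof.
move=> Gx card_Lx; apply/eqP; rewrite eqEcard card_Lx leqnn andbT subsetI cycle_subG Gx.
by rewrite /= sub_LdivT exponent_cycle.
Qed.

Lemma card_cycles_of_order_le1 k : #|'Ldiv_k(G)| = k -> (#|cycles_of_order k| <= 1)%N.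
Proof.
move=> card_Lk; rewrite -(cards1 'Ldiv_k(G)); apply/subset_leq_card/subsetP.
by move=> _ /imsetP[x /setIdP[Gx /eqP ox] ->]; rewrite inE -ox cycle_eq_Ldiv ?ox.
Qed.

Lemma Ldiv_dvd_subset d m : (d %| m)%N -> 'Ldiv_d(G) \subset 'Ldiv_m(G).
Proof.
move=> /dvdnP[l ->]; apply/subsetP => x /setIP[Gx]; rewrite !inE Gx /=.
by rewrite mulnC expgM => /eqP->; rewrite expg1n.
Qed.

Lemma card_Ldiv_odd m : odd m -> (2 * m %| #|G|)%N ->
  #|'Ldiv_2(G)| = 2 -> #|'Ldiv_(2 * m)%N(G)| = (2 * m)%N -> #|'Ldiv_m(G)| = m.
Proof.
move=> odd_m dvd_2m card_L2 card_L2m.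
have m_dvd : (m %| 2 * m)%N by apply: dvdn_mull.
have two_dvd : (2 %| 2 * m)%N by apply: dvdn_mulr.
have /dvdnP[q card_Lm] := Frobenius_Ldiv (dvdn_trans m_dvd dvd_2m).
have tiL : 'Ldiv_m(G) :&: 'Ldiv_2(G) \subset [1].
  apply/subsetP => x; rewrite !inE -!order_dvdn => /andP[/andP[_ ox_m] /andP[_ ox_2]].
  have : (#[x] %| gcdn m 2)%N by rewrite dvdn_gcd ox_m ox_2.
  by rewrite (eqP (_ : coprime m 2)) ?coprimen2 // dvdn1 order_eq1.
have /subset_leq_card : 'Ldiv_m(G) :|: 'Ldiv_2(G) \subset 'Ldiv_(2 * m)%N(G).
  by rewrite subUset !Ldiv_dvd_subset.
rewrite -(leq_add2r #|'Ldiv_m(G) :&: 'Ldiv_2(G)|) cardsUI card_L2 card_L2m.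
have := subset_leq_card tiL; have := card_Ldiv_gt0 m; rewrite cards1 card_Lm.
have m_gt0 : (0 < m)%N by rewrite lt0n; apply: contraTneq odd_m => ->.
rewrite muln_gt0 m_gt0 andbT => q_gt0 le_ti le_sum.
have : (q * m < 2 * m)%N by lia.
by rewrite ltn_pmul2r //; case: q q_gt0 {card_Lm le_sum} => [|[|]] // _ _; rewrite mul1n.
Qed.

Section DivisorsOfOrder.
Variable n : nat.
Hypotheses (n_gt0 : (0 < n)%N) (n_dvd : (n %| #|G|)%N).

Let Frobenius_count m : (m %| n)%N ->
  (1 * m <= \sum_(k <- divisors m) #|cycles_of_order k| * totient k)%N.
Proof.
move=> m_dvd; rewrite mul1n -card_Ldiv_divisors ?(dvdn_gt0 n_gt0) //.
exact: leq_card_Ldiv (dvdn_trans m_dvd n_dvd).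
Qed.

Lemma ndivisors_le_card_cyc_subgroups_dvd : (ndivisors n <= #|cyc_subgroups_dvd G n|)%N.
Proof.
have [le_count _] := totient_weighted_divisor_count n_gt0 Frobenius_count.
by rewrite card_cyc_subgroups_dvd // /ndivisors -[size _]mul1n.
Qed.

Lemma card_Ldiv_of_card_cyc_subgroups_dvd : #|cyc_subgroups_dvd G n| = ndivisors n ->
  forall m, (m %| n)%N -> #|'Ldiv_m(G)| = m.
Proof.
move=> card_C; have [_ eq_count] := totient_weighted_divisor_count n_gt0 Frobenius_count.
have {}eq_count m : (m %| n)%N -> odd n || ~~ odd m -> #|'Ldiv_m(G)| = m.
  move=> m_dvd m_cond; rewrite card_Ldiv_divisors ?(dvdn_gt0 n_gt0) // eq_count ?mul1n //.
  by rewrite -card_cyc_subgroups_dvd // card_C mul1n.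
move=> m m_dvd; case m_cond: (odd n || ~~ odd m); first exact: eq_count.
move/negbT: m_cond; rewrite negb_or negbK => /andP[even_n odd_m].
have dvd_2m : (2 * m %| n)%N by rewrite Gauss_dvd ?coprime2n // dvdn2 even_n m_dvd.
apply: card_Ldiv_odd => //; first exact: dvdn_trans dvd_2m n_dvd.
  by apply: eq_count; [apply: dvdn_trans dvd_2m; apply: dvdn_mulr | rewrite orbT].
by apply: eq_count; rewrite // oddM /= orbT.
Qed.

Lemma card_cycles_of_order_eq1 : (forall m, (m %| n)%N -> #|'Ldiv_m(G)| = m) ->
  forall k, (k %| n)%N -> #|cycles_of_order k| = 1%N.
Proof.
move=> card_L k; rewrite dvdn_divisors //.
apply: (@eq1_of_sum_ge_size _ _ (fun k => #|cycles_of_order k|)).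
  by move=> j; rewrite -dvdn_divisors // => /card_L/card_cycles_of_order_le1.
by rewrite -card_cyc_subgroups_dvd // ndivisors_le_card_cyc_subgroups_dvd.
Qed.

Lemma card_cyc_subgroups_dvd_of_card_Ldiv : (forall m, (m %| n)%N -> #|'Ldiv_m(G)| = m) ->
  #|cyc_subgroups_dvd G n| = ndivisors n.
Proof.
move=> card_L; rewrite card_cyc_subgroups_dvd // /ndivisors -sum1_size.
by apply: eq_big_seq => k; rewrite -dvdn_divisors // => /(card_cycles_of_order_eq1 card_L).
Qed.

Lemma cyclic_gen_Ldiv : (forall m, (m %| n)%N -> #|'Ldiv_m(G)| = m) ->
  cyclic <<'Ldiv_n(G)>> /\ #|<<'Ldiv_n(G)>>| = n.
Proof.
move=> card_L.
have /card_gt0P[_ /imsetP[x /setIdP[Gx /eqP ox] _]] : (0 < #|cycles_of_order n|)%N.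
  by rewrite card_cycles_of_order_eq1.
by rewrite -ox -cycle_eq_Ldiv ?ox ?card_L // genGid cycle_cyclic.
Qed.

Lemma card_Ldiv_of_cyclic_gen : cyclic <<'Ldiv_n(G)>> ->
  forall m, (m %| n)%N -> #|'Ldiv_m(G)| = m.
Proof.
move=> cycK m m_dvd; apply/eqP.
rewrite eqn_leq leq_card_Ldiv ?(dvdn_trans m_dvd n_dvd) // andbT.
apply: leq_trans (card_Ldiv_cyclic cycK (dvdn_gt0 n_gt0 m_dvd)).
apply/subset_leq_card; rewrite subsetI subsetIr andbT.
exact: subset_trans (Ldiv_dvd_subset m_dvd) (subset_gen _).
Qed.

End DivisorsOfOrder.

End CyclicSubgroups.

Local Open Scope group_scope.

Theorem corollary3p1 (gT : finGroupType) (G : {group gT}) (n : nat)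
  (n_gt0 : (0 < n)%N) (n_dvd : (n %| #|G|)%N) :
  (ndivisors n <= #|cyc_subgroups_dvd G n|)%N /\
  [/\ ((forall m : nat, (0 < m)%N -> (m %| n)%N ->
          #|[set x in G | x ^+ m == 1]| = m) <->
       #|cyc_subgroups_dvd G n| = ndivisors n),
      (#|cyc_subgroups_dvd G n| = ndivisors n <->
       (cyclic << \bigcup_(H in cyc_subgroups_dvd G n) H >> /\
        #|<< \bigcup_(H in cyc_subgroups_dvd G n) H >>| = n)) &
      ((forall m : nat, (0 < m)%N -> (m %| n)%N ->
          #|[set x in G | x ^+ m == 1]| = m) <->
       (cyclic << \bigcup_(H in cyc_subgroups_dvd G n) H >> /\
        #|<< \bigcup_(H in cyc_subgroups_dvd G n) H >>| = n))].
Proof.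
have card_LdivE : (forall m, (0 < m)%N -> (m %| n)%N -> #|[set x in G | x ^+ m == 1]| = m)
    <-> (forall m, (m %| n)%N -> #|'Ldiv_m(G)| = m).
  have LdivE m : [set x in G | x ^+ m == 1] = 'Ldiv_m(G) by apply/setP => x; rewrite !inE.
  split=> card_L m; first by move=> m_dvd; rewrite -LdivE card_L ?(dvdn_gt0 n_gt0 m_dvd).
  by move=> _ m_dvd; rewrite LdivE card_L.
rewrite bigcup_cyc_subgroups_dvd.
have Ldiv_iff_count : _ <-> _ := conj (card_cyc_subgroups_dvd_of_card_Ldiv n_gt0 n_dvd)
  (card_Ldiv_of_card_cyc_subgroups_dvd n_gt0 n_dvd).
have Ldiv_iff_cyclic : _ <-> _ := conj (cyclic_gen_Ldiv n_gt0 n_dvd)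
  (fun cyc_card => card_Ldiv_of_cyclic_gen n_gt0 n_dvd (proj1 cyc_card)).
split; first exact: ndivisors_le_card_cyc_subgroups_dvd.
split; first exact: iff_trans card_LdivE Ldiv_iff_count.
  exact: iff_trans (iff_sym Ldiv_iff_count) Ldiv_iff_cyclic.
exact: iff_trans card_LdivE Ldiv_iff_cyclic.
Qed.
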